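(* $\mathsf{LPO}<_W\mathsf{B_F}$ and $\mathsf{LLPO}<_W\mathsf{B_I^-}$.
   Context: A represented space is a pair $(X,\delta_X)$ with $\delta_X:\subseteq\mathbb N^{\mathbb N}\to X$ a partial surjection. For a partial multi-valued map $f:\subseteq X\rightrightarrows Y$ between represented spaces, a realizer of $f$ is a partial function $F:\subseteq\mathbb N^{\mathbb N}\to\mathbb N^{\mathbb N}$ with $\delta_Y(F(p))\in f(\delta_X(p))$ for all $p\in\mathrm{dom}(f\circ\delta_X)$. We write $f\le_W g$ (Weihrauch reducibility) if there are computable partial functions $H,K:\subseteq\mathbb N^{\mathbb N}\to\mathbb N^{\mathbb N}$ such that for every realizer $G$ of $g$ the function $p\mapsto H\langle p,G(K(p))\rangle$ is a realizer of $f$, where $\langle\cdot,\cdot\rangle$ is a standard computable pairing on $\mathbb N^{\mathbb N}$. $f<_W g$ means $f\le_W g$ and $g\not\le_W f$. $\mathsf{LPO}:\mathbb N^{\mathbb N}\to\mathbb N$ maps $p$ to $0$ if $p(n)=0$ for some $n$ and to $1$ otherwise. $\mathsf{LLPO}:\subseteq\mathbb N^{\mathbb N}\rightrightarrows\mathbb N$ is defined on sequences $p$ with $p(k)\ne0$ for at most one $k$, with $0\in\mathsf{LLPO}(p)$ iff $p(2n)=0$ for all $n$ and $1\in\mathsf{LLPO}(p)$ iff $p(2n+1)=0$ for all $n$. $\mathbb R$ carries the Cauchy representation; $\mathbb R_<$ (resp. $\mathbb R_>$) is $\mathbb R$ represented by sequences of rationals with supremum (resp. infimum) the number. $\mathsf{B_F}:\mathbb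 R_<\rightrightarrows\mathbb R$, $x\mapsto[x,\infty)$. $\mathsf{B_I^-}:\subseteq\mathbb R_<\times\mathbb R_>\rightrightarrows\mathbb R$, $(x,y)\mapsto[x,y]$, defined for $x<y$. *)

From Stdlib Require Import Reals QArith Qreals List Arith ZArith.
Import ListNotations.
Open Scope R_scope.

Definition baire := nat -> nat.

Definition bpair (p q : baire) : baire :=
  fun k => if Nat.even k then p (Nat.div2 k) else q (Nat.div2 k).
Definition bfst (p : baire) : baire := fun n => p (2 * n)%nat.
Definition bsnd (p : baire) : baire := fun n => p (2 * n + 1)%nat.

(** * Computability: oracle (Kleene) partial recursive functions.
    A term denotes a partial function N^k -> N relative to an oracle p : baire. *)
Inductive orec : Type :=
| OZero : orec
| OSucc : orec
| OProj : nat -> orec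
| OOracle : orec
| OComp : orec -> list orec -> orec
| ORec : orec -> orec -> orec         (* primitive recursion on 1st arg  *)
| OMin : orec -> orec.

Inductive oeval (p : baire) : orec -> list nat -> nat -> Prop :=
| ev_zero : forall xs, oeval p OZero xs 0
| ev_succ : forall x, oeval p OSucc [x] (S x)
| ev_proj : forall i xs, (i < length xs)%nat -> oeval p (OProj i) xs (nth i xs 0%nat)
| ev_oracle : forall x, oeval p OOracle [x] (p x)
| ev_comp : forall f gs xs ys v,
    Forall2 (fun g y => oeval p g xs y) gs ys ->
    oeval p f ys v -> oeval p (OComp f gs) xs v
| ev_rec0 : forall f g xs v, oeval p f xs v -> oeval p (ORec f g) (0%nat :: xs) v
| ev_recS : forall f g n xs r v,
    oeval p (ORec f g) (n :: xs) r -> oeval p g (n :: r :: xs) v ->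
    oeval p (ORec f g) (S n :: xs) v
| ev_min : forall f xs n,
    oeval p f (n :: xs) 0%nat ->
    (forall m, (m < n)%nat -> exists v, oeval p f (m :: xs) (S v)) ->
    oeval p (OMin f) xs n.

Definition cfun (t : orec) (p q : baire) : Prop :=
  forall n, oeval p t [n] (q n).

(** * Represented spaces: a (partial, surjective) naming relation
    [names p x] = "p is a name of x", i.e. delta(p) = x. *)
Definition rep (X : Type) := baire -> X -> Prop.

(** Multivalued partial maps f :⊆ X ⇉ Y as relations; dom f = {x | ∃y, f x y}. *)
Definition mv (X Y : Type) := X -> Y -> Prop.

Definition realizer {X Y} (dX : rep X) (dY : rep Y) (f : mv X Y)
  (R : baire -> baire -> Prop) : Prop :=
  forall p x, dX p x -> (exists y, f x y) ->
    exists q, R p q /\ exists y, dY q y /\ f x y.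

(** Weihrauch reducibility f ≤_W g. Realizers G of g range over all partial
    functions Baire -> Baire (encoded as option-valued functions). *)
Definition W_le {X Y Z W} (dX : rep X) (dY : rep Y) (f : mv X Y)
  (dZ : rep Z) (dW : rep W) (g : mv Z W) : Prop :=
  exists H K : orec,
    forall G : baire -> option baire,
      realizer dZ dW g (fun k q => G k = Some q) ->
      realizer dX dY f
        (fun p r => exists k q, cfun K p k /\ G k = Some q /\ cfun H (bpair p q) r).

Definition W_lt {X Y Z W} (dX : rep X) (dY : rep Y) (f : mv X Y)
  (dZ : rep Z) (dW : rep W) (g : mv Z W) : Prop :=
  W_le dX dY f dZ dW g /\ ~ W_le dZ dW g dX dY f.

Definition rep_baire : rep baire := fun p x => forall n, p n = x n.
Definition rep_nat : rep nat := fun p n => p 0%nat = n.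

(** Standard numbering of the rationals (Cantor unpairing, then Z × positive). *)
Definition unpair (n : nat) : nat * nat :=
  let w := ((Nat.sqrt (8 * n + 1) - 1) / 2)%nat in
  let t := (w * (w + 1) / 2)%nat in
  let y := (n - t)%nat in
  ((w - y)%nat, y).
Definition zdec (k : nat) : Z :=
  if Nat.even k then Z.of_nat (Nat.div2 k) else (- Z.of_nat (Nat.div2 (S k)))%Z.
Definition qcode (n : nat) : Q :=
  let (a, b) := unpair n in Qmake (zdec a) (Pos.of_succ_nat b).
Definition qv (n : nat) : R := Q2R (qcode n).

Definition rep_R : rep R := fun p x => forall n, Rabs (qv (p n) - x) <= / 2 ^ n.
Definition rep_Rlt : rep R := fun p x =>
  (forall n, qv (p n) <= x) /\ (forall eps, 0 < eps -> exists n, x - eps < qv (p n)).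
Definition rep_Rgt : rep R := fun p x =>
  (forall n, x <= qv (p n)) /\ (forall eps, 0 < eps -> exists n, qv (p n) < x + eps).
Definition rep_prod {X Y} (dX : rep X) (dY : rep Y) : rep (X * Y) :=
  fun p xy => dX (bfst p) (fst xy) /\ dY (bsnd p) (snd xy).

Definition LPO : mv baire nat := fun p y =>
  ((exists n, p n = 0%nat) /\ y = 0%nat) \/ ((forall n, p n <> 0%nat) /\ y = 1%nat).

Definition LLPO : mv baire nat := fun p y =>
  (forall k l, p k <> 0%nat -> p l <> 0%nat -> k = l) /\
  ((y = 0%nat /\ forall n, p (2 * n)%nat = 0%nat) \/
   (y = 1%nat /\ forall n, p (2 * n + 1)%nat = 0%nat)).

(** B_F : R_< ⇉ R, x |-> [x, ∞). *)
Definition BF : mv R R := fun x y => x <= y.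
(** B_I^- :⊆ R_< × R_> ⇉ R, (x,y) |-> [x,y], defined for x < y. *)
Definition BIm : mv (R * R) R := fun xy z =>
  fst xy < snd xy /\ fst xy <= z <= snd xy.

(** LPO reduces to B_F: the forward map turns [p] into an
    [R_<]-name of [m + 1], where [m] is the first zero of [p] (or of 0 if there
    is none); any real above it bounds [m], so a bounded search decides LPO.
    LLPO reduces to B_I^-: the forward map names [[-1, 1]], shrunk to
    [[-1, -1/2]] or [[1/2, 1]] when a nonzero entry at an even or odd index
    shows up, and the sign of a point of the interval answers LLPO.

    Negative directions are continuity arguments.  Oracle machines are
    continuous (use principle, [cfun_use]).  LPO and LLPO have realizers
    returning a bit which equals a fixed value [bo] exactly when some finite
    evidence is present.  Section [BitDiscontinuity] shows that no reduction can
    use such a realizer for a problem admitting "escapes": arbitrarily small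
    changes of the input that defeat a backward map with a fixed bit.  B_F
    escapes by raising the lower bound, B_I^- by shrinking the interval away
    from an already committed approximation. *)

From Stdlib Require Import Reals.
From Stdlib Require Import QArith Qreals List Arith ZArith Lia Lra.
From Stdlib Require Import Classical ClassicalEpsilon FunctionalExtensionality.
Import ListNotations.
Open Scope nat_scope.

Definition agree (p p' : baire) (N : nat) : Prop := forall i, i < N -> p' i = p i.

Lemma agree_refl p N : agree p p N.
Proof. intros i _. reflexivity. Qed.

Lemma agree_mono p p' N M : M <= N -> agree p p' N -> agree p p' M.
Proof. intros HMN A i Hi. apply A. lia. Qed.

Lemma oeval_ind_nested (p : baire) (P : orec -> list nat -> nat -> Prop) :
  (forall xs, P OZero xs 0) ->
  (forall x, P OSucc [x] (S x)) ->
  (forall i xs, i < length xs -> P (OProj i) xs (nth i xs 0)) ->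
  (forall x, P OOracle [x] (p x)) ->
  (forall f gs xs ys v,
      Forall2 (fun g y => oeval p g xs y /\ P g xs y) gs ys ->
      oeval p f ys v -> P f ys v -> P (OComp f gs) xs v) ->
  (forall f g xs v, oeval p f xs v -> P f xs v -> P (ORec f g) (0 :: xs) v) ->
  (forall f g n xs r v,
      oeval p (ORec f g) (n :: xs) r -> P (ORec f g) (n :: xs) r ->
      oeval p g (n :: r :: xs) v -> P g (n :: r :: xs) v ->
      P (ORec f g) (S n :: xs) v) ->
  (forall f xs n,
      oeval p f (n :: xs) 0 -> P f (n :: xs) 0 ->
      (forall m, m < n -> exists v, oeval p f (m :: xs) (S v) /\ P f (m :: xs) (S v)) ->
      P (OMin f) xs n) ->
  forall t xs v, oeval p t xs v -> P t xs v.
Proof.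
  intros Hz Hs Hp Ho Hc Hr0 HrS Hm.
  fix IH 4. intros t xs v H. destruct H.
  - apply Hz.
  - apply Hs.
  - apply Hp; assumption.
  - apply Ho.
  - apply (Hc f gs xs ys v); [| assumption | apply IH; assumption].
    clear H0. revert gs ys H. fix IHl 3. intros gs ys H. destruct H; constructor.
    + split; [assumption | apply IH; assumption].
    + apply IHl; assumption.
  - apply Hr0; [| apply IH]; assumption.
  - apply (HrS f g n xs r v); try assumption; apply IH; assumption.
  - apply Hm; [assumption | apply IH; assumption |].
    intros m Hmn. destruct (H0 m Hmn) as [w Hw]. exists w. split; [| apply IH]; assumption.
Qed.

Lemma oeval_det p t xs v : oeval p t xs v -> forall v', oeval p t xs v' -> v = v'.
Proof.
  revert t xs v.
  apply (oeval_ind_nested p (fun t xs v => forall v', oeval p t xs v' -> v = v')).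
  - intros xs v' H'. inversion H'; reflexivity.
  - intros x v' H'. inversion H'; reflexivity.
  - intros i xs _ v' H'. inversion H'; reflexivity.
  - intros x v' H'. inversion H'; reflexivity.
  - intros f gs xs ys v Hgs _ IHf v' H'.
    inversion H' as [| | | |? ? ? ys' ? Hgs' Hf' | | |]; subst.
    assert (ys = ys') as <-.
    { clear - Hgs Hgs'. revert ys' Hgs'.
      induction Hgs as [| g gs y ys [_ IHg] _ IHgs]; intros ys' Hgs'; inversion Hgs'; subst.
      - reflexivity.
      - f_equal; auto. }
    apply IHf; assumption.
  - intros f g xs v _ IHf v' H'. inversion H'; subst. auto.
  - intros f g n xs r v _ IHrec _ IHg v' H'. inversion H' as [| | | | | |? ? ? ? r' ? Hr' Hg' |]; subst.
    apply IHrec in Hr'. subst. auto.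
  - intros f xs n _ IHzero Hbefore v' H'. inversion H' as [| | | | | | |? ? ? Hz' Hb']; subst.
    destruct (lt_eq_lt_dec n v') as [[Hl | <-] | Hl]; [| reflexivity |].
    + destruct (Hb' n Hl) as [w Hw]. apply IHzero in Hw. discriminate.
    + destruct (Hbefore v' Hl) as [w [_ IHw]]. apply IHw in Hz'. discriminate.
Qed.

Lemma agree_Forall2 {S T} p (R : baire -> S -> T -> Prop) gs ys :
  Forall2 (fun g y => exists N, forall p', agree p p' N -> R p' g y) gs ys ->
  exists N, forall p', agree p p' N -> Forall2 (R p') gs ys.
Proof.
  induction 1 as [| g gs y ys [N1 HN1] _ [N2 HN2]].
  - exists 0. constructor.
  - exists (N1 + N2). intros p' A. constructor.
    + apply HN1. eapply agree_mono; [| exact A]. lia.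
    + apply HN2. eapply agree_mono; [| exact A]. lia.
Qed.

Lemma agree_below p (R : baire -> nat -> Prop) n :
  (forall m, m < n -> exists N, forall p', agree p p' N -> R p' m) ->
  exists N, forall p', agree p p' N -> forall m, m < n -> R p' m.
Proof.
  induction n as [| n IHn]; intros Hn.
  - exists 0. intros. lia.
  - destruct IHn as [N1 HN1]; [intros; apply Hn; lia |].
    destruct (Hn n (Nat.lt_succ_diag_r n)) as [N2 HN2].
    exists (N1 + N2). intros p' A m Hm.
    destruct (Nat.eq_dec m n) as [-> | Hne].
    + apply HN2. eapply agree_mono; [| exact A]. lia.
    + apply HN1; [eapply agree_mono; [| exact A]; lia | lia].
Qed.

(** Use principle: a terminating computation queries only finitely many
    oracle values, hence gives the same result on every oracle agreeing with
    the original one on a long enough prefix. *)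
Lemma oeval_use p t xs v :
  oeval p t xs v -> exists N, forall p', agree p p' N -> oeval p' t xs v.
Proof.
  revert t xs v.
  apply (oeval_ind_nested p (fun t xs v => exists N, forall p', agree p p' N -> oeval p' t xs v)).
  - exists 0. intros. constructor.
  - exists 0. intros. constructor.
  - intros i xs Hi. exists 0. intros. constructor. assumption.
  - intros x. exists (S x). intros p' A. rewrite <- (A x) by lia. constructor.
  - intros f gs xs ys v Hgs _ [N2 HN2].
    destruct (agree_Forall2 p (fun p' g y => oeval p' g xs y) gs ys) as [N1 HN1].
    { eapply Forall2_impl; [| exact Hgs]. intros g y [_ IH]. exact IH. }
    exists (N1 + N2). intros p' A. econstructor.
    + apply HN1. eapply agree_mono; [| exact A]. lia.
    + apply HN2. eapply agree_mono; [| exact A]. lia.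
  - intros f g xs v _ [N HN]. exists N. intros. constructor. auto.
  - intros f g n xs r v _ [N1 HN1] _ [N2 HN2]. exists (N1 + N2). intros p' A. econstructor.
    + apply HN1. eapply agree_mono; [| exact A]. lia.
    + apply HN2. eapply agree_mono; [| exact A]. lia.
  - intros f xs n _ [N1 HN1] Hbefore.
    destruct (agree_below p (fun p' m => exists w, oeval p' f (m :: xs) (S w)) n) as [N2 HN2].
    { intros m Hm. destruct (Hbefore m Hm) as [w [_ [N HN]]]. exists N. eauto. }
    exists (N1 + N2). intros p' A. constructor.
    + apply HN1. eapply agree_mono; [| exact A]. lia.
    + apply HN2. eapply agree_mono; [| exact A]. lia.
Qed.

Lemma cfun_use t p k n :
  cfun t p k -> exists U, forall p' k', agree p p' U -> cfun t p' k' -> k' n = k n.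
Proof.
  intros Hk. destruct (oeval_use _ _ _ _ (Hk n)) as [U HU]. exists U.
  intros p' k' A Hk'. symmetry. eapply oeval_det; [apply HU, A | apply Hk'].
Qed.

Lemma even_double n : Nat.even (2 * n) = true.
Proof. rewrite Nat.even_mul. reflexivity. Qed.

Lemma even_double_succ n : Nat.even (2 * n + 1) = false.
Proof. rewrite Nat.add_1_r, Nat.even_succ, <- Nat.negb_even, even_double. reflexivity. Qed.

Lemma bfst_bpair p q : bfst (bpair p q) = p.
Proof.
  apply functional_extensionality. intros n. unfold bfst, bpair.
  rewrite even_double, Nat.div2_double. reflexivity.
Qed.

Lemma bsnd_bpair p q : bsnd (bpair p q) = q.
Proof.
  apply functional_extensionality. intros n. unfold bsnd, bpair.
  rewrite even_double_succ, Nat.add_1_r, Nat.div2_succ_double. reflexivity.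
Qed.

Lemma bpair_double p q j : bpair p q (j + j) = p j.
Proof.
  unfold bpair. replace (j + j) with (2 * j) by lia.
  rewrite even_double, Nat.div2_double. reflexivity.
Qed.

Lemma bpair_eta p : bpair (bfst p) (bsnd p) = p.
Proof.
  apply functional_extensionality. intros k. unfold bpair, bfst, bsnd.
  pose proof (Nat.div2_odd k) as Hk. rewrite <- Nat.negb_even in Hk.
  destruct (Nat.even k); simpl in Hk; f_equal; lia.
Qed.

Lemma bpair_agree p p' q q' N :
  agree p p' N -> agree q q' N -> agree (bpair p q) (bpair p' q') N.
Proof.
  intros Ap Aq i Hi. pose proof (Nat.le_div2_diag_l i).
  unfold bpair. destruct (Nat.even i); [apply Ap | apply Aq]; lia.
Qed.

(** Triangular numbers; [unpair] inverts the Cantor pairing [(a, b) |-> T (a + b) + b]. *)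
Fixpoint T n := match n with 0 => 0 | S k => T k + S k end.

Lemma T_double n : 2 * T n = n * (n + 1).
Proof. induction n; simpl T; lia. Qed.

Lemma T_mono n m : n <= m -> T n <= T m.
Proof. induction 1; simpl; lia. Qed.

Lemma T_ge n : n <= T n.
Proof. induction n; simpl; lia. Qed.

Lemma unpair_T s b : b <= s -> unpair (T s + b) = (s - b, b).
Proof.
  intros Hb. unfold unpair.
  pose proof (Nat.sqrt_spec (8 * (T s + b) + 1) ltac:(lia)) as [Sp1 Sp2].
  set (r := Nat.sqrt (8 * (T s + b) + 1)) in *.
  pose proof (T_double s).
  assert (2 * s + 1 <= r) by nia. assert (r <= 2 * s + 2) by nia.
  assert (Hr : r = 2 * s + 1 \/ r = 2 * s + 2) by lia.
  replace ((r - 1) / 2) with s.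
  2:{ destruct Hr as [-> | ->].
      - replace (2 * s + 1 - 1) with (s * 2) by lia. rewrite Nat.div_mul; lia.
      - replace (2 * s + 2 - 1) with (1 + s * 2) by lia. rewrite Nat.div_add; simpl; lia. }
  replace (s * (s + 1) / 2) with (T s) by (rewrite <- T_double, Nat.mul_comm, Nat.div_mul; lia).
  f_equal; lia.
Qed.

Lemma diagonal_decomposition c : exists w b, b <= w /\ c = T w + b.
Proof.
  induction c as [| c [w [b [Hb ->]]]].
  - exists 0, 0. simpl. lia.
  - destruct (Nat.eq_dec b w) as [-> | Hne].
    + exists (S w), 0. simpl. lia.
    + exists w, (S b). lia.
Qed.

Lemma IZR_pos_succ b : IZR (Z.pos (Pos.of_succ_nat b)) = INR (S b).
Proof. rewrite Znat.Zpos_P_of_succ_nat, INR_IZR_INZ. f_equal. lia. Qed.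

Lemma qv_unpair c a b : unpair c = (a, b) -> qv c = (IZR (zdec a) / INR (S b))%R.
Proof. intros H. unfold qv, qcode. rewrite H. unfold Q2R. simpl. rewrite IZR_pos_succ. reflexivity. Qed.

Lemma zdec_abs a : (Z.abs (zdec a) <= Z.of_nat a)%Z.
Proof.
  unfold zdec. destruct (Nat.even a); cbv beta iota.
  - pose proof (Nat.le_div2_diag_l a). set (d := Nat.div2 a) in *. lia.
  - destruct a as [| a]; [discriminate |].
    pose proof (Nat.le_div2 (S a)). set (d := Nat.div2 (S (S a))) in *. lia.
Qed.

Lemma zdec_even n : zdec (2 * n) = Z.of_nat n.
Proof. unfold zdec. rewrite even_double, Nat.div2_double. reflexivity. Qed.

Lemma zdec_surj z : exists a, zdec a = z.
Proof.
  destruct (Z_le_gt_dec 0 z).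
  - exists (2 * Z.to_nat z). rewrite zdec_even. lia.
  - exists (S (2 * (Z.to_nat (- z) - 1))). unfold zdec.
    rewrite Nat.even_succ, <- Nat.negb_even, even_double. simpl negb. cbv iota.
    replace (S (S (2 * (Z.to_nat (- z) - 1)))) with (2 * Z.to_nat (- z)) by lia.
    rewrite Nat.div2_double. lia.
Qed.

Lemma qv_le c : (qv c <= INR c)%R.
Proof.
  destruct (diagonal_decomposition c) as [w [b [Hb Hc]]].
  rewrite (qv_unpair c (w - b) b) by (rewrite Hc; apply unpair_T; exact Hb).
  assert (Hnum : (IZR (zdec (w - b)) <= INR c)%R).
  { rewrite INR_IZR_INZ. apply IZR_le. pose proof (zdec_abs (w - b)). pose proof (T_ge w). lia. }
  assert (Hden : (1 <= INR (S b))%R) by (rewrite S_INR; pose proof (pos_INR b); lra).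
  pose proof (pos_INR c).
  unfold Rdiv. destruct (Rle_or_lt 0 (IZR (zdec (w - b)))).
  - apply Rle_trans with (IZR (zdec (w - b)) * 1)%R; [| lra].
    apply Rmult_le_compat_l; [assumption |].
    rewrite <- Rinv_1. apply Rinv_le_contravar; lra.
  - assert (0 < / INR (S b))%R by (apply Rinv_0_lt_compat; lra).
    assert (IZR (zdec (w - b)) * / INR (S b) < 0)%R by (apply Rmult_neg_pos; lra). lra.
Qed.

Lemma qv_surj q : exists c, qv c = Q2R q.
Proof.
  destruct q as [z d]. destruct (zdec_surj z) as [a Ha].
  exists (T (a + (Pos.to_nat d - 1)) + (Pos.to_nat d - 1)).
  unfold qv, qcode. rewrite unpair_T by lia.
  replace (a + (Pos.to_nat d - 1) - (Pos.to_nat d - 1)) with a by lia.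
  rewrite Ha, (SuccNat2Pos.inv (Pos.to_nat d - 1) d) by lia. reflexivity.
Qed.

Lemma qv_affine cx cy (a : Q) : exists c, qv c = (qv cx + Q2R a * (qv cy - qv cx))%R.
Proof.
  destruct (qv_surj (qcode cx + a * (qcode cy - qcode cx))%Q) as [c Hc].
  exists c. rewrite Hc. unfold qv. rewrite Q2R_plus, Q2R_mult, Q2R_minus. reflexivity.
Qed.

Definition nat_code (m : nat) : nat := T (m + m).

Lemma qv_nat_code m : qv (nat_code m) = INR m.
Proof.
  unfold nat_code. rewrite <- (Nat.add_0_r (T (m + m))).
  rewrite (qv_unpair _ (2 * m) 0) by (rewrite unpair_T; [f_equal; lia | lia]).
  rewrite zdec_even, <- INR_IZR_INZ. simpl INR. field.
Qed.

Lemma qv_unbounded (B : R) : exists c, (B < qv c)%R.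
Proof.
  destruct (INR_unbounded B) as [m Hm]. exists (nat_code m). rewrite qv_nat_code. exact Hm.
Qed.

Lemma qv_sign c :
  (Nat.even (fst (unpair c)) = true -> (0 <= qv c)%R) /\
  (Nat.even (fst (unpair c)) = false -> (qv c < 0)%R).
Proof.
  destruct (unpair c) as [a b] eqn:Hc. simpl fst. rewrite (qv_unpair _ _ _ Hc).
  assert (Hden : (0 < / INR (S b))%R) by (apply Rinv_0_lt_compat, lt_0_INR; lia).
  unfold zdec, Rdiv. split; intros E; rewrite E; cbv beta iota.
  - apply Rmult_le_pos; [apply IZR_le; set (d := Nat.div2 a); lia | lra].
  - apply Rmult_neg_pos; [| exact Hden]. apply IZR_lt.
    destruct a as [| a]; [discriminate |].
    pose proof (Nat.div2_le_lower_bound (S (S a)) 1).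
    set (d := Nat.div2 (S (S a))) in *. lia.
Qed.

Lemma qv_code0 : qv 0 = 0%R.
Proof. unfold qv, qcode. vm_compute unpair. unfold Q2R, zdec. simpl. field. Qed.
Lemma qv_code1 : qv 1 = (-1)%R.
Proof. unfold qv, qcode. vm_compute unpair. unfold Q2R, zdec. simpl. field. Qed.
Lemma qv_code3 : qv 3 = 1%R.
Proof. unfold qv, qcode. vm_compute unpair. unfold Q2R, zdec. simpl. field. Qed.
Lemma qv_code4 : qv 4 = (-1/2)%R.
Proof. unfold qv, qcode. vm_compute unpair. unfold Q2R, zdec. simpl. field. Qed.
Lemma qv_code7 : qv 7 = (1/2)%R.
Proof. unfold qv, qcode. vm_compute unpair. unfold Q2R, zdec. simpl. field. Qed.

Lemma comp1 p f g xs a v :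
  oeval p g xs a -> oeval p f [a] v -> oeval p (OComp f [g]) xs v.
Proof. intros. econstructor; eauto. Qed.

Lemma comp2 p f g1 g2 xs a1 a2 v :
  oeval p g1 xs a1 -> oeval p g2 xs a2 -> oeval p f [a1; a2] v ->
  oeval p (OComp f [g1; g2]) xs v.
Proof. intros. econstructor; eauto. Qed.

Lemma comp3 p f g1 g2 g3 xs a1 a2 a3 v :
  oeval p g1 xs a1 -> oeval p g2 xs a2 -> oeval p g3 xs a3 ->
  oeval p f [a1; a2; a3] v -> oeval p (OComp f [g1; g2; g3]) xs v.
Proof. intros. econstructor; eauto. Qed.

Lemma proj_ok p i xs : i < length xs -> oeval p (OProj i) xs (nth i xs 0).
Proof. constructor. assumption. Qed.

Lemma rec_ok p f g xs (F : nat -> nat) :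
  oeval p f xs (F 0) -> (forall n, oeval p g (n :: F n :: xs) (F (S n))) ->
  forall n, oeval p (ORec f g) (n :: xs) (F n).
Proof. intros H0 HS n. induction n; econstructor; eauto. Qed.

Lemma min_ok p f xs (F : nat -> nat) n :
  (forall m, oeval p f (m :: xs) (F m)) -> F n = 0 -> (forall m, m < n -> F m <> 0) ->
  oeval p (OMin f) xs n.
Proof.
  intros HF Hn Hm. constructor; [rewrite <- Hn; apply HF |].
  intros m Hlt. destruct (F m) as [| v] eqn:E; [exfalso; eapply Hm; eauto |].
  exists v. rewrite <- E. apply HF.
Qed.

Fixpoint const (k : nat) : orec :=
  match k with 0 => OZero | S k => OComp OSucc [const k] end.

Lemma const_ok p k xs : oeval p (const k) xs k.
Proof. induction k; [constructor | eapply comp1; [eassumption | constructor]]. Qed.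

Definition IFZ (c a b : orec) : orec := OComp (ORec (OProj 0) (OProj 3)) [c; a; b].

Lemma ifz_ok p c a b xs vc va vb :
  oeval p c xs vc -> oeval p a xs va -> oeval p b xs vb ->
  oeval p (IFZ c a b) xs (if vc =? 0 then va else vb).
Proof.
  intros Hc Ha Hb. eapply comp3; [exact Hc | exact Ha | exact Hb |].
  apply (rec_ok p _ _ [va; vb] (fun c => if c =? 0 then va else vb)).
  - apply (proj_ok p 0 [va; vb]). simpl; lia.
  - intros n. apply (proj_ok p 3 [_; _; va; vb]). simpl; lia.
Qed.

Definition ADD : orec := ORec (OProj 0) (OComp OSucc [OProj 1]).

Lemma add_ok p a b : oeval p ADD [a; b] (a + b).
Proof.
  apply (rec_ok p _ _ [b] (fun a => a + b)).
  - apply (proj_ok p 0 [b]). simpl; lia.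
  - intros n. eapply comp1; [apply (proj_ok p 1 [_; _; b]); simpl; lia | constructor].
Qed.

Definition DBL : orec := OComp ADD [OProj 0; OProj 0].

Lemma dbl_ok p j : oeval p DBL [j] (j + j).
Proof. eapply comp2; try apply (proj_ok p 0 [j]); simpl; try lia. apply add_ok. Qed.

Definition TRI : orec := ORec OZero (OComp ADD [OProj 1; OComp OSucc [OProj 0]]).

Lemma tri_ok p s : oeval p TRI [s] (T s).
Proof.
  apply (rec_ok p _ _ [] T); [constructor |]. intros n.
  eapply comp2; [apply (proj_ok p 1 [_; _]); simpl; lia | | apply add_ok].
  eapply comp1; [apply (proj_ok p 0 [_; _]); simpl; lia | constructor].
Qed.

Definition PRED : orec := ORec OZero (OProj 0).

Lemma pred_ok p x : oeval p PRED [x] (Nat.pred x).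
Proof.
  apply (rec_ok p _ _ [] Nat.pred); [constructor |].
  intros n. apply (proj_ok p 0 [_; _]). simpl; lia.
Qed.

(** [SUB] on [[y; x]] computes the truncated difference [x - y]. *)
Definition SUB : orec := ORec (OProj 0) (OComp PRED [OProj 1]).

Lemma sub_ok p y x : oeval p SUB [y; x] (x - y).
Proof.
  apply (rec_ok p _ _ [x] (fun y => x - y)).
  - rewrite Nat.sub_0_r. apply (proj_ok p 0 [x]). simpl; lia.
  - intros n. eapply comp1; [apply (proj_ok p 1 [_; _; _]); simpl; lia |].
    replace (x - S n) with (Nat.pred (x - n)) by lia. apply pred_ok.
Qed.

Definition PAR : orec := ORec OZero (IFZ (OProj 1) (const 1) OZero).

Lemma par_ok p a : oeval p PAR [a] (if Nat.even a then 0 else 1).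
Proof.
  apply (rec_ok p _ _ [] (fun a => if Nat.even a then 0 else 1)); [constructor |].
  intros n. rewrite Nat.even_succ, <- Nat.negb_even.
  replace (if negb (Nat.even n) then 0 else 1) with
    (if (if Nat.even n then 0 else 1) =? 0 then 1 else 0) by (destruct (Nat.even n); auto).
  apply ifz_ok; [apply (proj_ok p 1 [_; _]); simpl; lia | apply const_ok | constructor].
Qed.

(** [UNPAIR1] computes the first component of [unpair]: the diagonal [w] of
    [c] is found by unbounded search for the least [w] with [c < T (w + 1)]. *)
Definition DIAG : orec :=
  OMin (OComp SUB [OComp TRI [OComp OSucc [OProj 0]]; OComp OSucc [OProj 1]]).
Definition UNPAIR1 : orec := OComp SUB [OComp SUB [OComp TRI [DIAG]; OProj 0]; DIAG].

Lemma unpair1_ok p c : oeval p UNPAIR1 [c] (fst (unpair c)).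
Proof.
  destruct (diagonal_decomposition c) as [w [b [Hb Hc]]].
  rewrite Hc at 2. rewrite unpair_T by exact Hb. simpl fst.
  assert (Hw : oeval p DIAG [c] w).
  { apply (min_ok p _ _ (fun m => S c - T (S m))).
    - intros m. eapply comp2; [| | apply sub_ok].
      + eapply comp1; [| apply tri_ok].
        eapply comp1; [apply (proj_ok p 0 [_; _]); simpl; lia | constructor].
      + eapply comp1; [apply (proj_ok p 1 [_; _]); simpl; lia | constructor].
    - cbn [T]. lia.
    - intros m Hm. pose proof (T_mono (S m) w ltac:(lia)). lia. }
  eapply comp2; [| exact Hw |].
  - eapply comp2; [eapply comp1; [exact Hw | apply tri_ok] | apply (proj_ok p 0 [c]); simpl; lia |].
    apply sub_ok.
  - replace (w - b) with (w - (c - T w)) by lia. apply sub_ok.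
Qed.

(** Bounded search: [first_tag hv tg n] is [tg j] for the least [j <= n] with
    [hv j = 0], and 0 if there is no such [j]. *)
Fixpoint first_tag (hv tg : nat -> nat) (n : nat) : nat :=
  match n with
  | 0 => if hv 0 =? 0 then tg 0 else 0
  | S m => if first_tag hv tg m =? 0 then (if hv (S m) =? 0 then tg (S m) else 0)
           else first_tag hv tg m
  end.

Lemma first_tag_none hv tg n : (forall j, j <= n -> hv j <> 0) -> first_tag hv tg n = 0.
Proof.
  induction n as [| n IHn]; intros H; simpl.
  - destruct (Nat.eqb_spec (hv 0) 0); [exfalso; eapply H; eauto | reflexivity].
  - rewrite IHn by (intros; apply H; lia). simpl.
    destruct (Nat.eqb_spec (hv (S n)) 0); [exfalso; eapply H; eauto | reflexivity].
Qed.

Lemma first_tag_first hv tg m :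
  hv m = 0 -> (forall j, j < m -> hv j <> 0) -> tg m <> 0 ->
  forall n, m <= n -> first_tag hv tg n = tg m.
Proof.
  intros Hm Hbefore Htg n Hn. induction Hn as [| n Hn IHn].
  - destruct m as [| m]; simpl; rewrite Hm; simpl; [reflexivity |].
    rewrite first_tag_none by (intros j Hj; apply Hbefore; lia). reflexivity.
  - simpl. rewrite IHn. destruct (Nat.eqb_spec (tg m) 0); [contradiction | reflexivity].
Qed.

Definition FIRST (HV TG : orec) : orec :=
  ORec (IFZ (OComp HV [OZero]) (OComp TG [OZero]) OZero)
    (IFZ (OProj 1)
       (IFZ (OComp HV [OComp OSucc [OProj 0]]) (OComp TG [OComp OSucc [OProj 0]]) OZero)
       (OProj 1)).

Lemma first_ok p HV TG hv tg :
  (forall j, oeval p HV [j] (hv j)) -> (forall j, oeval p TG [j] (tg j)) ->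
  forall n, oeval p (FIRST HV TG) [n] (first_tag hv tg n).
Proof.
  intros Hhv Htg. apply (rec_ok p _ _ [] (first_tag hv tg)).
  - apply ifz_ok; [eapply comp1; [constructor | apply Hhv] |
                   eapply comp1; [constructor | apply Htg] | constructor].
  - intros m. apply ifz_ok; [apply (proj_ok p 1 [_; _]); simpl; lia | |
                             apply (proj_ok p 1 [_; _]); simpl; lia].
    assert (Hsucc : oeval p (OComp OSucc [OProj 0]) [m; first_tag hv tg m] (S m)).
    { eapply comp1; [apply (proj_ok p 0 [_; _]); simpl; lia | constructor]. }
    apply ifz_ok; [eapply comp1; [exact Hsucc | apply Hhv] |
                   eapply comp1; [exact Hsucc | apply Htg] | constructor].
Qed.

Definition cb (b : nat) : baire := fun _ => b.

Definition spl (p : baire) (U c : nat) : baire := fun i => if i <? U then p i else c.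

Lemma agree_spl p U c : agree p (spl p U c) U.
Proof. intros i Hi. unfold spl. destruct (Nat.ltb_spec i U); [reflexivity | lia]. Qed.

Lemma rep_Rlt_two_values a c0 c1 :
  (qv c0 <= qv c1)%R -> (forall n, a n = c0 \/ a n = c1) -> (exists n, a n = c1) ->
  rep_Rlt a (qv c1).
Proof.
  intros Hle Hval [m Hm]. split.
  - intros n. destruct (Hval n) as [-> | ->]; lra.
  - intros eps He. exists m. rewrite Hm. lra.
Qed.

Lemma rep_Rgt_two_values a c0 c1 :
  (qv c1 <= qv c0)%R -> (forall n, a n = c0 \/ a n = c1) -> (exists n, a n = c1) ->
  rep_Rgt a (qv c1).
Proof.
  intros Hle Hval [m Hm]. split.
  - intros n. destruct (Hval n) as [-> | ->]; lra.
  - intros eps He. exists m. rewrite Hm. lra.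
Qed.

Lemma rep_Rlt_const c : rep_Rlt (cb c) (qv c).
Proof. apply (rep_Rlt_two_values _ c c); [lra | now right | now exists 0]. Qed.

Lemma rep_Rgt_const c : rep_Rgt (cb c) (qv c).
Proof. apply (rep_Rgt_two_values _ c c); [lra | now right | now exists 0]. Qed.

Lemma rep_Rlt_spl p X U c : rep_Rlt p X -> (X <= qv c)%R -> rep_Rlt (spl p U c) (qv c).
Proof.
  intros [Hub _] Hc. split.
  - intros n. unfold spl. destruct (n <? U); [specialize (Hub n); lra | lra].
  - intros eps He. exists U. unfold spl. rewrite Nat.ltb_irrefl. lra.
Qed.

Lemma rep_Rgt_spl p Y U c : rep_Rgt p Y -> (qv c <= Y)%R -> rep_Rgt (spl p U c) (qv c).
Proof.
  intros [Hlb _] Hc. split.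
  - intros n. unfold spl. destruct (n <? U); [specialize (Hlb n); lra | lra].
  - intros eps He. exists U. unfold spl. rewrite Nat.ltb_irrefl. lra.
Qed.

Lemma Rabs_le_between x a : (Rabs x <= a)%R -> (- a <= x <= a)%R.
Proof. unfold Rabs. destruct (Rcase_abs x); lra. Qed.

Lemma least_zero (p : baire) n : p n = 0 -> exists m, p m = 0 /\ forall j, j < m -> p j <> 0.
Proof.
  induction n as [n IH] using lt_wf_ind. intros Hn.
  destruct (classic (exists j, j < n /\ p j = 0)) as [[j [Hj1 Hj2]] | Hnone].
  - exact (IH j Hj1 Hj2).
  - exists n. split; [exact Hn |]. intros j Hj E. apply Hnone. eauto.
Qed.

(** LPO to B_F: the forward map lists the rational [m + 1] from the first zero
    [m] of [p] on (and 0 before), an [R_<]-name of [m + 1] (or of 0 if [p] has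
    no zero).  Any [y] above it bounds [m], so the backward map only has to
    search the zeros of [p] below the first approximation of [y] plus 2. *)
Definition lpo_bound (p : baire) (n : nat) : nat := nat_code (first_tag p S n).

Definition K_LPO : orec := OComp TRI [OComp DBL [FIRST OOracle OSucc]].

Lemma K_LPO_ok p : cfun K_LPO p (lpo_bound p).
Proof.
  intros n. eapply comp1; [eapply comp1 | apply tri_ok].
  - apply first_ok; intros j; constructor.
  - apply dbl_ok.
Qed.

Lemma lpo_bound_zero p m :
  p m = 0 -> (forall j, j < m -> p j <> 0) -> rep_Rlt (lpo_bound p) (INR (S m)).
Proof.
  intros Hm Hbefore. rewrite <- qv_nat_code.
  apply (rep_Rlt_two_values _ (nat_code 0)).
  - rewrite !qv_nat_code. apply le_INR. lia.
  - intros n. unfold lpo_bound. destruct (le_lt_dec m n) as [Hle | Hlt].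
    + right. rewrite (first_tag_first p S m); auto.
    + left. rewrite first_tag_none; [reflexivity |]. intros j Hj. apply Hbefore. lia.
  - exists m. unfold lpo_bound. rewrite (first_tag_first p S m); auto.
Qed.

Lemma lpo_bound_no_zero p : (forall n, p n <> 0) -> rep_Rlt (lpo_bound p) 0%R.
Proof.
  intros Hnz. rewrite <- qv_code0.
  replace (lpo_bound p) with (cb 0); [apply rep_Rlt_const |].
  apply functional_extensionality. intros n. unfold lpo_bound.
  rewrite first_tag_none by auto. reflexivity.
Qed.

Definition lpo_answer (p q : baire) : nat :=
  if first_tag p (fun _ => 1) (S (q 0)) =? 0 then 1 else 0.

Definition H_LPO : orec :=
  IFZ (OComp (FIRST (OComp OOracle [DBL]) (const 1)) [OComp OSucc [OComp OOracle [const 1]]])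
    (const 1) OZero.

Lemma H_LPO_ok p q : cfun H_LPO (bpair p q) (cb (lpo_answer p q)).
Proof.
  intros n. apply ifz_ok; [| apply const_ok | constructor].
  eapply comp1; [eapply comp1; [eapply comp1; [apply const_ok | constructor] | constructor] |].
  apply first_ok; [| intros; apply const_ok].
  intros j. eapply comp1; [apply dbl_ok |]. rewrite <- (bpair_double p q j). constructor.
Qed.

Lemma lpo_answer_correct p q y :
  rep_R q y ->
  ((exists m, p m = 0 /\ (forall j, j < m -> p j <> 0) /\ (INR (S m) <= y)%R) \/
   (forall n, p n <> 0)) ->
  LPO p (lpo_answer p q).
Proof.
  intros Hy [[m [Hm [Hbefore Hmy]]] | Hnz]; unfold lpo_answer.
  - assert (Hmq : m < S (q 0)).
    { specialize (Hy 0). simpl in Hy. rewrite Rinv_1 in Hy. apply Rabs_le_between in Hy.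
      pose proof (qv_le (q 0)). apply INR_lt. rewrite !S_INR in *. lra. }
    rewrite (first_tag_first p _ m Hm Hbefore) by lia.
    left. split; [exists m; exact Hm | reflexivity].
  - rewrite first_tag_none by auto. right. split; [exact Hnz | reflexivity].
Qed.

Lemma LPO_le_BF : W_le rep_baire rep_nat LPO rep_Rlt rep_R BF.
Proof.
  exists H_LPO, K_LPO. intros G HG p x Hp _.
  assert (Hx : x = p) by (apply functional_extensionality; intros n; symmetry; apply Hp).
  subst x.
  assert (Hbound : exists X, rep_Rlt (lpo_bound p) X /\
            forall q y, rep_R q y -> (X <= y)%R -> LPO p (lpo_answer p q)).
  { destruct (classic (exists n, p n = 0)) as [[n Hn] | Hnone].
    - destruct (least_zero p n Hn) as [m [Hm Hbefore]].
      exists (INR (S m)). split; [apply lpo_bound_zero; auto |].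
      intros q y Hy Hle. apply (lpo_answer_correct p q y Hy). left. eauto.
    - assert (Hnz : forall n, p n <> 0) by (intros n E; apply Hnone; eauto).
      exists 0%R. split; [apply lpo_bound_no_zero; auto |].
      intros q y Hy _. apply (lpo_answer_correct p q y Hy). right. exact Hnz. }
  destruct Hbound as [X [HX Hanswer]].
  destruct (HG (lpo_bound p) X HX) as [q [Hq [y [Hy Hxy]]]]; [exists X; unfold BF; lra |].
  exists (cb (lpo_answer p q)). split.
  - exists (lpo_bound p), q. split; [apply K_LPO_ok | split; [exact Hq | apply H_LPO_ok]].
  - exists (lpo_answer p q). split; [reflexivity | exact (Hanswer q y Hy Hxy)].
Qed.

Definition hv_even (p : baire) (j : nat) : nat :=
  if p j =? 0 then 1 else if Nat.even j then 0 else 1.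
Definition hv_odd (p : baire) (j : nat) : nat :=
  if p j =? 0 then 1 else if Nat.even j then 1 else 0.

(** Even positions carry the lower end (code 1 = -1, code 7 = 1/2), odd
    positions the upper end (code 3 = 1, code 4 = -1/2). *)
Definition llpo_name (p : baire) (i : nat) : nat :=
  if Nat.even i
  then (if first_tag (hv_odd p) (fun _ => 1) i =? 0 then 1 else 7)
  else (if first_tag (hv_even p) (fun _ => 1) i =? 0 then 3 else 4).

Definition K_LLPO : orec :=
  IFZ PAR
    (IFZ (FIRST (IFZ OOracle (const 1) (IFZ PAR (const 1) OZero)) (const 1)) (const 1) (const 7))
    (IFZ (FIRST (IFZ OOracle (const 1) PAR) (const 1)) (const 3) (const 4)).

Lemma K_LLPO_ok p : cfun K_LLPO p (llpo_name p).
Proof.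
  intros i. unfold llpo_name.
  replace (if Nat.even i then _ else _) with
    (if (if Nat.even i then 0 else 1) =? 0
     then (if first_tag (hv_odd p) (fun _ => 1) i =? 0 then 1 else 7)
     else (if first_tag (hv_even p) (fun _ => 1) i =? 0 then 3 else 4))
    by (destruct (Nat.even i); reflexivity).
  apply ifz_ok; [apply par_ok | |]; (apply ifz_ok; [| apply const_ok | apply const_ok]);
    (apply first_ok; [intros j | intros; apply const_ok]);
    (apply ifz_ok; [constructor | apply const_ok |]).
  - replace (if Nat.even j then 1 else 0) with
      (if (if Nat.even j then 0 else 1) =? 0 then 1 else 0) by (destruct (Nat.even j); reflexivity).
    apply ifz_ok; [apply par_ok | apply const_ok | constructor].
  - apply par_ok.
Qed.

Lemma first_tag_unique_hit hv m :
  hv m = 0 -> (forall j, hv j = 0 -> j = m) ->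
  forall n, m <= n -> first_tag hv (fun _ => 1) n = 1.
Proof.
  intros Hm Huniq n Hn. apply (first_tag_first hv (fun _ => 1) m Hm); [| discriminate | exact Hn].
  intros j Hj E. apply Huniq in E. lia.
Qed.

Definition at_most_one_nonzero (p : baire) : Prop :=
  forall k l, p k <> 0 -> p l <> 0 -> k = l.

Lemma llpo_lower_hit p j :
  at_most_one_nonzero p -> p j <> 0 -> Nat.even j = false -> rep_Rlt (bfst (llpo_name p)) (1/2)%R.
Proof.
  intros U Hj Ej. rewrite <- qv_code7.
  assert (Hhit : hv_odd p j = 0) by (unfold hv_odd; rewrite Ej; destruct (Nat.eqb_spec (p j) 0); tauto).
  assert (Huniq : forall j', hv_odd p j' = 0 -> j' = j).
  { intros j' E. unfold hv_odd in E. destruct (Nat.eqb_spec (p j') 0); [discriminate |]. auto. }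
  apply (rep_Rlt_two_values _ 1).
  - rewrite qv_code1, qv_code7. lra.
  - intros n. unfold bfst, llpo_name. rewrite even_double.
    destruct (first_tag _ _ _ =? 0); auto.
  - exists j. unfold bfst, llpo_name. rewrite even_double.
    rewrite (first_tag_unique_hit _ j Hhit Huniq) by lia. reflexivity.
Qed.

Lemma llpo_lower_no_hit p :
  (forall j, p j <> 0 -> Nat.even j = true) -> rep_Rlt (bfst (llpo_name p)) (-1)%R.
Proof.
  intros Hev. rewrite <- qv_code1.
  replace (bfst (llpo_name p)) with (cb 1); [apply rep_Rlt_const |].
  apply functional_extensionality. intros n. unfold bfst, llpo_name. rewrite even_double.
  rewrite first_tag_none; [reflexivity |]. intros j _. unfold hv_odd.
  destruct (Nat.eqb_spec (p j) 0) as [| Hj]; [discriminate |]. rewrite (Hev j Hj). discriminate.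
Qed.

Lemma llpo_upper_hit p j :
  at_most_one_nonzero p -> p j <> 0 -> Nat.even j = true -> rep_Rgt (bsnd (llpo_name p)) (-1/2)%R.
Proof.
  intros U Hj Ej. rewrite <- qv_code4.
  assert (Hhit : hv_even p j = 0) by (unfold hv_even; rewrite Ej; destruct (Nat.eqb_spec (p j) 0); tauto).
  assert (Huniq : forall j', hv_even p j' = 0 -> j' = j).
  { intros j' E. unfold hv_even in E. destruct (Nat.eqb_spec (p j') 0); [discriminate |]. auto. }
  apply (rep_Rgt_two_values _ 3).
  - rewrite qv_code3, qv_code4. lra.
  - intros n. unfold bsnd, llpo_name. rewrite even_double_succ. destruct (first_tag _ _ _ =? 0); auto.
  - exists j. unfold bsnd, llpo_name. rewrite even_double_succ. rewrite (first_tag_unique_hit _ j Hhit Huniq) by lia. reflexivity.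
Qed.

Lemma llpo_upper_no_hit p :
  (forall j, p j <> 0 -> Nat.even j = false) -> rep_Rgt (bsnd (llpo_name p)) 1%R.
Proof.
  intros Hodd. rewrite <- qv_code3.
  replace (bsnd (llpo_name p)) with (cb 3); [apply rep_Rgt_const |].
  apply functional_extensionality. intros n.
  unfold bsnd, llpo_name. rewrite even_double_succ.
  rewrite first_tag_none; [reflexivity |]. intros j _. unfold hv_even.
  destruct (Nat.eqb_spec (p j) 0) as [| Hj]; [discriminate |]. rewrite (Hodd j Hj). discriminate.
Qed.

Lemma llpo_name_rep p :
  at_most_one_nonzero p ->
  exists X Y, rep_prod rep_Rlt rep_Rgt (llpo_name p) (X, Y) /\ (X < Y)%R /\
    (forall j, p j <> 0 -> Nat.even j = true -> Y = (-1/2)%R) /\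
    (forall j, p j <> 0 -> Nat.even j = false -> X = (1/2)%R).
Proof.
  intros U.
  destruct (classic (exists j, p j <> 0)) as [[j Hj] | Hnone].
  - assert (Hparity : forall j', p j' <> 0 -> Nat.even j' = Nat.even j) by (intros j' Hj'; now rewrite (U j' j)).
    destruct (Nat.even j) eqn:Ej.
    + exists (-1)%R, (-1/2)%R. split; [split; simpl |].
      * apply llpo_lower_no_hit. exact Hparity.
      * exact (llpo_upper_hit p j U Hj Ej).
      * split; [lra | split; [reflexivity |]]. intros j' Hj' Ej'. rewrite (Hparity j' Hj') in Ej'. congruence.
    + exists (1/2)%R, 1%R. split; [split; simpl |].
      * exact (llpo_lower_hit p j U Hj Ej).
      * apply llpo_upper_no_hit. exact Hparity.
      * split; [lra | split; [| reflexivity]]. intros j' Hj' Ej'. rewrite (Hparity j' Hj') in Ej'. congruence.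
  - assert (Hzero : forall j, p j <> 0 -> False) by eauto.
    exists (-1)%R, 1%R. split; [split; simpl |].
    + apply llpo_lower_no_hit. intros j Hj. contradiction (Hzero j).
    + apply llpo_upper_no_hit. intros j Hj. contradiction (Hzero j).
    + split; [lra | split]; intros j Hj; contradiction (Hzero j).
Qed.

(** The backward map: the sign bit of the [1/4]-approximation [q 2]. *)
Definition llpo_answer (q : baire) : nat := if Nat.even (fst (unpair (q 2))) then 0 else 1.

Definition H_LLPO : orec := OComp PAR [OComp UNPAIR1 [OComp OOracle [const 5]]].

Lemma H_LLPO_ok p q : cfun H_LLPO (bpair p q) (cb (llpo_answer q)).
Proof.
  intros n. eapply comp1; [| apply par_ok].
  eapply comp1; [| apply unpair1_ok].
  eapply comp1; [apply const_ok |]. change (q 2) with (bpair p q 5). constructor.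
Qed.

Lemma LLPO_le_BIm : W_le rep_baire rep_nat LLPO (rep_prod rep_Rlt rep_Rgt) rep_R BIm.
Proof.
  exists H_LLPO, K_LLPO. intros G HG p x Hp [y0 [Hu _]].
  assert (Hx : x = p) by (apply functional_extensionality; intros n; symmetry; apply Hp).
  subst x.
  destruct (llpo_name_rep p Hu) as [X [Y [Hrep [Hxy [Heven Hodd]]]]].
  destruct (HG (llpo_name p) (X, Y) Hrep) as [q [Hq [z [Hz [_ Hbetween]]]]];
    [exists X; unfold BIm; simpl; lra |].
  simpl in Hbetween.
  exists (cb (llpo_answer q)). split.
  - exists (llpo_name p), q. split; [apply K_LLPO_ok | split; [exact Hq | apply H_LLPO_ok]].
  - exists (llpo_answer q). split; [reflexivity | split; [exact Hu |]].
    specialize (Hz 2). simpl in Hz. apply Rabs_le_between in Hz.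
    destruct (qv_sign (q 2)) as [Hnonneg Hneg]. unfold llpo_answer.
    destruct (Nat.even (fst (unpair (q 2)))) eqn:Ea.
    + left. split; [reflexivity |]. intros n.
      destruct (Nat.eq_dec (p (2 * n)) 0) as [E | E]; [exact E | exfalso].
      specialize (Heven _ E (even_double n)). specialize (Hnonneg eq_refl). lra.
    + right. split; [reflexivity |]. intros n.
      destruct (Nat.eq_dec (p (2 * n + 1)) 0) as [E | E]; [exact E | exfalso].
      specialize (Hodd _ E (even_double_succ n)). specialize (Hneg eq_refl). lra.
Qed.

(** A realizer of LPO or LLPO may return a bit [bit_of Q bo bc k]
    which equals [bo] exactly when some finite piece of evidence [Q j (k j)] is
    present in its input.  If such a realizer served a reduction of a problem
    whose solutions can always be "escaped" by a small change of the input, we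
    reach a contradiction: evidence for [bo] persists on a neighbourhood, so the
    backward map would solve the problem continuously there; without evidence the
    answer is [bc], and escaping once more defeats the backward map with [bc]. *)
Definition bit_of (Q : nat -> nat -> Prop) (bo bc : nat) (k : baire) : nat :=
  if excluded_middle_informative (exists j, Q j (k j)) then bo else bc.

Definition solves {X Y} (dX : rep X) (dY : rep Y) (f : mv X Y) (p r : baire) : Prop :=
  exists x y, dX p x /\ dY r y /\ f x y.

Lemma reduction_via_bit {X Y} (dX : rep X) (dY : rep Y) (f : mv X Y) g (bit : baire -> nat) :
  realizer rep_baire rep_nat g (fun k q => Some (cb (bit k)) = Some q) ->
  W_le dX dY f rep_baire rep_nat g ->
  exists H K : orec, forall p x, dX p x -> (exists y, f x y) ->
    exists k r, cfun K p k /\ cfun H (bpair p (cb (bit k))) r /\ solves dX dY f p r.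
Proof.
  intros Hbit [H [K Hred]]. exists H, K. intros p x Hp Hdom.
  destruct (Hred _ Hbit p x Hp Hdom) as [r [[k [q [Hk [Hq Hr]]]] [y [Hy Hf]]]].
  injection Hq as <-. exists k, r. repeat split; auto. exists x, y. auto.
Qed.

Section BitDiscontinuity.

Variables (K H : orec) (Q : nat -> nat -> Prop) (bo bc : nat).
Variables (Adm : baire -> Prop) (Good : baire -> baire -> Prop).

Hypothesis reduction : forall p, Adm p ->
  exists k r, cfun K p k /\ cfun H (bpair p (cb (bit_of Q bo bc k))) r /\ Good p r.

(** No fixed oracle answer [b] lets [H] succeed on a whole neighbourhood. *)
Hypothesis escape : forall p b r L, Adm p -> cfun H (bpair p (cb b)) r ->
  exists p', Adm p' /\ agree p p' L /\ forall r', cfun H (bpair p' (cb b)) r' -> ~ Good p' r'.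

Lemma evidence_persists p k j :
  cfun K p k -> Q j (k j) ->
  exists L, forall p' k', agree p p' L -> cfun K p' k' -> bit_of Q bo bc k' = bo.
Proof.
  intros Hk Hj. destruct (cfun_use _ _ _ j Hk) as [L HL]. exists L.
  intros p' k' A Hk'. unfold bit_of.
  destruct (excluded_middle_informative _) as [_ | Hno]; [reflexivity |].
  exfalso. apply Hno. exists j. rewrite (HL p' k' A Hk'). exact Hj.
Qed.

Lemma bit_not_locally_constant p L b :
  Adm p -> ~ (forall p' k', agree p p' L -> cfun K p' k' -> bit_of Q bo bc k' = b).
Proof.
  intros Hp Hconst. destruct (reduction p Hp) as [k [r [Hk [Hr _]]]].
  rewrite (Hconst p k (agree_refl p L) Hk) in Hr.
  destruct (escape p b r L Hp Hr) as [p' [Hp' [A Hbad]]].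
  destruct (reduction p' Hp') as [k' [r' [Hk' [Hr' Hgood]]]].
  rewrite (Hconst p' k' A Hk') in Hr'. exact (Hbad r' Hr' Hgood).
Qed.

Lemma reduction_with_bc p : Adm p ->
  exists r, cfun H (bpair p (cb bc)) r /\ Good p r.
Proof.
  intros Hp. destruct (reduction p Hp) as [k [r [Hk [Hr Hgood]]]].
  destruct (classic (exists j, Q j (k j))) as [[j Hj] | Hno].
  - destruct (evidence_persists p k j Hk Hj) as [L HL].
    exfalso. exact (bit_not_locally_constant p L bo Hp HL).
  - exists r. split; [| exact Hgood]. unfold bit_of in Hr.
    destruct (excluded_middle_informative _); [contradiction | exact Hr].
Qed.

Theorem no_admissible_input p : ~ Adm p.
Proof.
  intros Hp. destruct (reduction_with_bc p Hp) as [r [Hr _]].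
  destruct (escape p bc r 0 Hp Hr) as [p' [Hp' [_ Hbad]]].
  destruct (reduction_with_bc p' Hp') as [r' [Hr' Hgood]].
  exact (Hbad r' Hr' Hgood).
Qed.

End BitDiscontinuity.

Lemma output_digit_stable Hm p q r N :
  cfun Hm (bpair p q) r ->
  exists U, forall p' r', agree p p' U -> cfun Hm (bpair p' q) r' -> r' N = r N.
Proof.
  intros Hr. destruct (cfun_use _ _ _ N Hr) as [U HU]. exists U.
  intros p' r' A Hr'. apply (HU (bpair p' q) r'); [| exact Hr'].
  apply bpair_agree; [exact A | apply agree_refl].
Qed.

(** B_F escapes: move the [R_<]-name to a rational beyond the first output digit. *)
Lemma BF_escape Hm p b r L :
  (exists X, rep_Rlt p X) -> cfun Hm (bpair p (cb b)) r ->
  exists p', (exists X, rep_Rlt p' X) /\ agree p p' L /\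
    forall r', cfun Hm (bpair p' (cb b)) r' -> ~ solves rep_Rlt rep_R BF p' r'.
Proof.
  intros [X HX] Hr. destruct (output_digit_stable Hm p (cb b) r 0 Hr) as [U HU].
  destruct (qv_unbounded (Rmax X (qv (r 0) + 1))) as [c Hc].
  pose proof (Rmax_l X (qv (r 0) + 1)). pose proof (Rmax_r X (qv (r 0) + 1)).
  exists (spl p (L + U) c). split; [| split].
  - exists (qv c). apply rep_Rlt_spl with X; [exact HX | lra].
  - eapply agree_mono; [| apply agree_spl]. lia.
  - intros r' Hr' [x [y [[Hx _] [Hy Hxy]]]].
    specialize (Hx (L + U)). unfold spl in Hx. rewrite Nat.ltb_irrefl in Hx.
    specialize (Hy 0). rewrite (HU (spl p (L + U) c) r') in Hy; [| eapply agree_mono; [| apply agree_spl]; lia | exact Hr'].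
    simpl in Hy. rewrite Rinv_1 in Hy. apply Rabs_le_between in Hy. unfold BF in Hxy. lra.
Qed.

Definition bit_LPO : baire -> nat := bit_of (fun _ v => v = 0) 0 1.

Lemma bit_LPO_realizes : realizer rep_baire rep_nat LPO (fun k q => Some (cb (bit_LPO k)) = Some q).
Proof.
  intros p x Hp _. exists (cb (bit_LPO p)). split; [reflexivity |].
  exists (bit_LPO p). split; [reflexivity |]. unfold bit_LPO, bit_of, LPO.
  destruct (excluded_middle_informative _) as [[n Hn] | Hn].
  - left. split; [exists n; rewrite <- Hp; exact Hn | reflexivity].
  - right. split; [| reflexivity]. intros n E. apply Hn. exists n. rewrite Hp. exact E.
Qed.

Lemma BF_not_le_LPO : ~ W_le rep_Rlt rep_R BF rep_baire rep_nat LPO.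
Proof.
  intros Hred. destruct (reduction_via_bit _ _ _ _ _ bit_LPO_realizes Hred) as [H [K Hsolve]].
  apply (no_admissible_input K H (fun _ v => v = 0) 0 1 (fun p => exists X, rep_Rlt p X)
           (solves rep_Rlt rep_R BF)) with (p := cb 0).
  - intros p [X HX]. apply (Hsolve p X HX). exists X. unfold BF. lra.
  - intros p b r L. apply BF_escape.
  - exists (qv 0). apply rep_Rlt_const.
Qed.

Lemma INR_lt_pow2 n : (INR n < 2 ^ n)%R.
Proof.
  induction n as [| n IHn]; [simpl; lra |]. rewrite S_INR. simpl.
  assert (1 <= 2 ^ n)%R by (clear IHn; induction n; simpl; lra). lra.
Qed.

Lemma small_pow2 w : (0 < w)%R -> exists N, (/ 2 ^ N < w)%R.
Proof.
  intros Hw. destruct (INR_unbounded (/ w)) as [m Hm]. exists m.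
  pose proof (INR_lt_pow2 m).
  assert (0 < / w)%R by (apply Rinv_0_lt_compat; exact Hw).
  rewrite <- (Rinv_inv w). apply Rinv_lt_contravar; nra.
Qed.

Lemma shrink_avoiding cx cy c eps :
  (qv cx < qv cy)%R -> (eps < (qv cy - qv cx) / 4)%R ->
  exists cx' cy', (qv cx <= qv cx' < qv cy' /\ qv cy' <= qv cy)%R /\
    forall z, (qv cx' <= z <= qv cy')%R -> (eps < Rabs (c - z))%R.
Proof.
  intros Hxy Heps.
  assert (Hfar : forall z, (eps < c - z \/ eps < z - c)%R -> (eps < Rabs (c - z))%R)
    by (intros z Hz; unfold Rabs; destruct (Rcase_abs (c - z)); lra).
  destruct (Rle_or_lt c ((qv cx + qv cy) / 2)) as [Hc | Hc].
  - destruct (qv_affine cx cy (3 # 4)) as [cx' Hcx'].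
    replace (Q2R (3 # 4)) with (3 / 4)%R in Hcx' by (unfold Q2R; simpl; field).
    exists cx', cy. split; [lra |]. intros z Hz. apply Hfar. lra.
  - destruct (qv_affine cx cy (1 # 4)) as [cy' Hcy'].
    replace (Q2R (1 # 4)) with (1 / 4)%R in Hcy' by (unfold Q2R; simpl; field).
    exists cx, cy'. split; [lra |]. intros z Hz. apply Hfar. lra.
Qed.

Definition interval_name (p : baire) : Prop :=
  exists cx cy, rep_prod rep_Rlt rep_Rgt p (qv cx, qv cy) /\ (qv cx < qv cy)%R.

(** B_I^- escapes: shrink the named interval away from the approximation the
    backward map has already committed to. *)
Lemma BIm_escape Hm p b r L :
  interval_name p -> cfun Hm (bpair p (cb b)) r ->
  exists p', interval_name p' /\ agree p p' L /\
    forall r', cfun Hm (bpair p' (cb b)) r' -> ~ solves (rep_prod rep_Rlt rep_Rgt) rep_R BIm p' r'.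
Proof.
  intros [cx [cy [[HX HY] Hxy]]] Hr. simpl in HX, HY.
  destruct (small_pow2 ((qv cy - qv cx) / 4)) as [N HN]; [lra |].
  destruct (output_digit_stable Hm p (cb b) r N Hr) as [U HU].
  destruct (shrink_avoiding cx cy (qv (r N)) (/ 2 ^ N) Hxy HN)
    as [cx' [cy' [[[Hx' Hxy'] Hy'] Hfar]]].
  set (M := L + U).
  set (p' := bpair (spl (bfst p) M cx') (spl (bsnd p) M cy')).
  assert (Hagree : agree p p' M).
  { pose proof (bpair_agree _ _ _ _ M (agree_spl (bfst p) M cx') (agree_spl (bsnd p) M cy')) as A.
    rewrite bpair_eta in A. exact A. }
  exists p'. split; [| split].
  - exists cx', cy'. split; [| exact Hxy']. unfold rep_prod, p'. rewrite bfst_bpair, bsnd_bpair.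
    split; [apply rep_Rlt_spl with (qv cx) | apply rep_Rgt_spl with (qv cy)]; assumption.
  - eapply agree_mono; [| exact Hagree]. unfold M. lia.
  - intros r' Hr' [[x y] [z [[Hx Hy] [Hz [_ Hbetween]]]]]. simpl in Hx, Hy, Hbetween.
    unfold p' in Hx, Hy. rewrite bfst_bpair in Hx. rewrite bsnd_bpair in Hy.
    destruct Hx as [Hx _]. destruct Hy as [Hy _]. specialize (Hx M). specialize (Hy M).
    unfold spl in Hx, Hy. rewrite Nat.ltb_irrefl in Hx, Hy.
    specialize (Hz N). rewrite (HU p' r') in Hz; [| eapply agree_mono; [| exact Hagree]; unfold M; lia | exact Hr'].
    specialize (Hfar z ltac:(lra)). lra.
Qed.

Definition bit_LLPO : baire -> nat := bit_of (fun j v => Nat.even j = true /\ v <> 0) 1 0.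

Lemma bit_LLPO_realizes :
  realizer rep_baire rep_nat LLPO (fun k q => Some (cb (bit_LLPO k)) = Some q).
Proof.
  intros p x Hp [y0 [Huniq _]]. exists (cb (bit_LLPO p)). split; [reflexivity |].
  exists (bit_LLPO p). split; [reflexivity |]. unfold bit_LLPO, bit_of, LLPO. split; [exact Huniq |].
  destruct (excluded_middle_informative _) as [[j [Ej Hj]] | Hno].
  - right. split; [reflexivity |]. intros n.
    destruct (Nat.eq_dec (x (2 * n + 1)) 0) as [E | E]; [exact E | exfalso].
    rewrite Hp in Hj. rewrite <- (Huniq _ _ E Hj), even_double_succ in Ej. discriminate.
  - left. split; [reflexivity |]. intros n. rewrite <- Hp.
    destruct (Nat.eq_dec (p (2 * n)) 0) as [E | E]; [exact E | exfalso].
    apply Hno. exists (2 * n). split; [apply even_double | exact E].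
Qed.

Lemma BIm_not_le_LLPO : ~ W_le (rep_prod rep_Rlt rep_Rgt) rep_R BIm rep_baire rep_nat LLPO.
Proof.
  intros Hred. destruct (reduction_via_bit _ _ _ _ _ bit_LLPO_realizes Hred) as [H [K Hsolve]].
  apply (no_admissible_input K H (fun j v => Nat.even j = true /\ v <> 0) 1 0 interval_name
           (solves (rep_prod rep_Rlt rep_Rgt) rep_R BIm)) with (p := bpair (cb 1) (cb 3)).
  - intros p [cx [cy [Hp Hxy]]]. apply (Hsolve p _ Hp). exists (qv cx). unfold BIm. simpl. lra.
  - intros p b r L. apply BIm_escape.
  - exists 1, 3. rewrite qv_code1, qv_code3. split; [| lra].
    unfold rep_prod. rewrite bfst_bpair, bsnd_bpair. simpl.
    rewrite <- qv_code1, <- qv_code3. split; [apply rep_Rlt_const | apply rep_Rgt_const].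
Qed.

Theorem proposition4p5 :
  W_lt rep_baire rep_nat LPO rep_Rlt rep_R BF /\
  W_lt rep_baire rep_nat LLPO (rep_prod rep_Rlt rep_Rgt) rep_R BIm.
Proof.
  split; split.
  - exact LPO_le_BF.
  - exact BF_not_le_LPO.
  - exact LLPO_le_BIm.
  - exact BIm_not_le_LLPO.
Qed.
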